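(* Let $p$ be a prime and $(K,|\cdot|)$ an algebraically closed ultrametric field of residue characteristic $p$. Let $q\ge1$ be an integer not divisible by $p$ and $\lambda\in K$ with $|\lambda|=1$ such that $\widetilde\lambda$ has order $q$ in $\widetilde K^*$. Let $f(z)=\lambda z+\cdots\in\mathcal{O}_K[[z]]$. (1) If $\mathrm{wideg}(f^q(z)-z)=q+1$ and $\lambda^q\ne1$, then $f$ has a unique periodic orbit in $\mathfrak{m}_K\setminus\{0\}$ of minimal period $q$, and every point $w_0$ of this orbit satisfies $|w_0|=|\lambda^q-1|^{1/q}$. (2) Let $n\ge1$ be an integer and suppose $\mathrm{wideg}\left(\frac{f^{qp^n}(z)-z}{f^{qp^{n-1}}(z)-z}\right)=qp^n$ and that every periodic point $z_0\in\mathfrak{m}_K$ of $f$ of period $qp^{n-1}$ satisfies $(f^{qp^n})'(z_0)\ne1$. Then $f$ has a unique cycle of minimal period $qp^n$, and this cycle is optimal, i.e., each of its points $z_0$ satisfies $|z_0|=\left|\frac{\lambda^{qp^n}-1}{\lambda^{qp^{n-1}}-1}\right|^{1/(qp^n)}$.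
   Context: $\mathcal{O}_K=\{|z|\le1\}$, $\mathfrak{m}_K=\{|z|<1\}$, $\widetilde K=\mathcal{O}_K/\mathfrak{m}_K$. Periodic points are taken in $\mathfrak{m}_K$. For $h\in\mathcal{O}_K[[z]]$, $\mathrm{wideg}(h)$ is the order (lowest degree of a nonzero term) of its reduction in $\widetilde K[[\zeta]]$. The power series $f^{qp^{n-1}}(z)-z$ divides $f^{qp^n}(z)-z$ in $\mathcal{O}_K[[z]]$. *)

From HB Require Import structures.
From mathcomp Require Import all_boot all_order all_algebra.
From mathcomp Require Import reals exp.
From Stdlib Require Import ClassicalEpsilon.
Set Implicit Arguments. Unset Strict Implicit. Unset Printing Implicit Defensive.
Import Order.TTheory GRing.Theory Num.Theory.
Local Open Scope ring_scope.

Section Ultrametric.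
Variables (R : realType) (K : fieldType) (v : K -> R).

Definition ultra_abs : Prop :=
  [/\ forall x, 0 <= v x,
      forall x, v x = 0 <-> x = 0,
      forall x y, v (x * y) = v x * v y &
      forall x y, v (x + y) <= Num.max (v x) (v y)].

Definition nontrivial_abs : Prop := exists x, 0 < v x /\ v x < 1.

Definition cvg_to (u : nat -> K) (l : K) : Prop :=
  forall e : R, 0 < e -> exists N, forall n, (N <= n)%N -> v (u n - l) < e.

Definition complete_abs : Prop :=
  forall u : nat -> K,
    (forall e : R, 0 < e -> exists N, forall m n, (N <= m)%N -> (N <= n)%N ->
        v (u m - u n) < e) ->
    exists l, cvg_to u l.

(** residue characteristic p : p = 0 in the residue field *)
Definition residue_char (p : nat) : Prop := prime p /\ v (p%:R) < 1.

(** the reduction of lam has order q in the multiplicative group of the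
    residue field *)
Definition residue_order (lam : K) (q : nat) : Prop :=
  v (lam ^+ q - 1) < 1 /\ forall k, (0 < k < q)%N -> ~ (v (lam ^+ k - 1) < 1).

Definition pser := nat -> K.

Definition ps_in_OK (a : pser) : Prop := forall n, v (a n) <= 1.

Definition psX : pser := fun n => (n == 1)%:R.
Definition ps1 : pser := fun n => (n == 0)%:R.
Definition pssub (a b : pser) : pser := fun n => a n - b n.
Definition psmul (a b : pser) : pser :=
  fun n => \sum_(i < n.+1) a i * b (n - i)%N.
Definition pspow (a : pser) (k : nat) : pser := iter k (psmul a) ps1.
(** composition g o f (meaningful when f has no constant term) *)
Definition pscomp (g f : pser) : pser :=
  fun n => \sum_(k < n.+1) g k * pspow f k n.
Definition psiter (f : pser) (m : nat) : pser := iter m (pscomp f) psX.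
Definition psderiv (a : pser) : pser := fun n => a n.+1 *+ n.+1.

(** wideg(h) = d : the reduction of h in Ktilde[[zeta]] has order exactly d *)
Definition wideg_is (h : pser) (d : nat) : Prop :=
  ~ (v (h d) < 1) /\ forall i, (i < d)%N -> v (h i) < 1.

Definition ps_eval (a : pser) (z : K) : K :=
  epsilon (inhabits 0)
    (fun l => cvg_to (fun N => \sum_(i < N) a i * z ^+ i) l).

Definition dyn (f : pser) (m : nat) (z : K) : K := iter m (ps_eval f) z.

Definition periodic_pt (f : pser) (m : nat) (z : K) : Prop :=
  v z < 1 /\ dyn f m z = z.

Definition min_period (f : pser) (m : nat) (z : K) : Prop :=
  [/\ v z < 1, (0 < m)%N, dyn f m z = z &
      forall k, (0 < k < m)%N -> dyn f k z <> z].

End Ultrametric.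

(* Weierstrass preparation: a power series [h] over O_K whose reduction has
   order [d] is, on the open unit disc, a unit times a monic polynomial of
   degree [d] whose roots all lie in m_K; so [h] has [d] zeros in m_K (with
   multiplicity) and the product of their absolute values is [|h(0)|].
   Since [f] is an isometry of m_K, all points of a cycle have the same
   absolute value.  A nonzero point of minimal period [k] forces
   [|lambda^k - 1| < 1], i.e. [q | k].  In (1) the zeros of [(f^q(z) - z)/z]
   are the nonzero fixed points of [f^q], hence of minimal period [q]; there
   are [q] of them, so they form a single cycle, and [|h(0)| = |lambda^q - 1|]
   gives the radius.  In (2) the multiplier hypothesis forbids common zeros of
   the quotient and of [f^(qp^(n-1))(z) - z], so the zeros of the quotient are
   exactly the points of minimal period [qp^n], and the same count applies. *)

From HB Require Import structures.
From mathcomp Require Import all_boot all_order all_algebra.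
From mathcomp Require Import reals exp.
From mathcomp Require Import ring lra zify.
From Stdlib Require Import ClassicalEpsilon FunctionalExtensionality.
Import Order.TTheory GRing.Theory Num.Theory.
Set Implicit Arguments. Unset Strict Implicit. Unset Printing Implicit Defensive.
Local Open Scope ring_scope.

Lemma uniform_lt1_bound (R : realDomainType) (F : nat -> R) n :
  (forall i, (i < n)%N -> 0 <= F i < 1) ->
  exists c, [/\ 0 <= c, c < 1 & forall i, (i < n)%N -> F i <= c].
Proof.
elim: n => [|n IH] H; first by exists 0; split.
have [|c [c0 c1 hc]] := IH; first by move=> i hi; apply: H; apply: ltnW.
have /andP[Fn0 Fn1] := H n (ltnSn n).
exists (Num.max c (F n)); split; rewrite ?le_max ?gt_max ?c0 ?c1 ?Fn1 //.
move=> i; rewrite ltnS leq_eqVlt => /orP[/eqP->|hi]; rewrite le_max ?lexx ?orbT //.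
by rewrite hc.
Qed.

Lemma exists_exprn_lt (R : archiRealFieldType) (c e : R) :
  0 <= c -> c < 1 -> 0 < e -> exists n, c ^+ n < e.
Proof.
move=> c0 c1 e0; have [->|cn0] := eqVneq c 0; first by exists 1%N; rewrite expr1.
have cp : 0 < c by rewrite lt_def cn0.
set t := c^-1 - 1; have tp : 0 < t by rewrite subr_gt0 invf_gt1.
have bernoulli n : 1 + t *+ n <= (1 + t) ^+ n.
  elim: n => [|n IH]; first by rewrite mulr0n addr0 expr0.
  have s0 : 0 <= t *+ n by rewrite mulrn_wge0 // ltW.
  rewrite exprS mulrS; move: IH s0; set s := t *+ n; set X := (1 + t) ^+ n; nra.
pose n := Num.Def.archi_bound (e^-1 / t); exists n.
have hb : e^-1 / t < n%:R.
  by apply: archi_boundP; rewrite divr_ge0 // ltW // invr_gt0.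
have : e^-1 < c^-1 ^+ n.
  have -> : c^-1 = 1 + t by rewrite /t addrC subrK.
  apply: lt_le_trans (bernoulli n); rewrite ltr_pdivrMr // in hb.
  by rewrite -mulr_natl ltr_wpDl // mulrC.
by rewrite exprVn ltf_pV2 ?posrE ?exprn_gt0.
Qed.

Lemma le_exprn_le0 (R : archiRealFieldType) (c x : R) :
  0 <= c -> c < 1 -> (forall n, x <= c ^+ n) -> x <= 0.
Proof.
move=> c0 c1 H; rewrite leNgt; apply/negP => x0.
have [n hn] := exists_exprn_lt c0 c1 x0.
by move: (H n); rewrite leNgt hn.
Qed.

Lemma prodr_const_seq (R : comPzSemiRingType) (T : eqType) (s : seq T) (F : T -> R) c :
  (forall x, x \in s -> F x = c) -> \prod_(x <- s) F x = c ^+ size s.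
Proof.
elim: s => [|a s IH] H; first by rewrite big_nil expr0.
rewrite big_cons IH ?H ?mem_head ?exprS // => x xs.
by apply: H; rewrite in_cons xs orbT.
Qed.

Lemma powR_exprn_inv (R : realType) (r : R) n :
  0 <= r -> (0 < n)%N -> powR (r ^+ n) n%:R^-1 = r.
Proof.
move=> r0 n0; rewrite -powR_mulrn // -powRrM mulfV ?powRr1 //.
by rewrite pnatr_eq0 -lt0n.
Qed.

(** * Ultrametric absolute values *)

Section ValuedField.
Variables (R : realType) (K : fieldType) (v : K -> R).
Hypothesis Hv : ultra_abs v.

Lemma v_ge0 x : 0 <= v x. Proof. by case: Hv. Qed.

Lemma v_eq0 x : (v x == 0) = (x == 0).
Proof. by case: Hv => _ H _ _; apply/eqP/eqP => /H. Qed.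

Lemma v0 : v 0 = 0. Proof. by apply/eqP; rewrite v_eq0. Qed.

Lemma vM x y : v (x * y) = v x * v y. Proof. by case: Hv. Qed.

Lemma vD x y : v (x + y) <= Num.max (v x) (v y). Proof. by case: Hv. Qed.

Lemma v1 : v 1 = 1.
Proof.
have n0 : v 1 != 0 by rewrite v_eq0 oner_eq0.
by apply: (mulfI n0); rewrite -vM !mulr1.
Qed.

Lemma vN x : v (- x) = v x.
Proof.
have vN1 : v (-1) = 1.
  have h := vM (-1) (-1); rewrite mulrNN mulr1 v1 in h.
  by apply/eqP; rewrite -(@eqrXn2 _ 2) ?v_ge0 // expr1n expr2 -h.
by rewrite -mulN1r vM vN1 mul1r.
Qed.

Lemma v_distC x y : v (x - y) = v (y - x).
Proof. by rewrite -opprB vN. Qed.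

Lemma vD_le x y B : v x <= B -> v y <= B -> v (x + y) <= B.
Proof. by move=> hx hy; apply: le_trans (vD x y) _; rewrite ge_max hx hy. Qed.

Lemma vD_lt x y B : v x < B -> v y < B -> v (x + y) < B.
Proof. by move=> hx hy; apply: le_lt_trans (vD x y) _; rewrite gt_max hx hy. Qed.

Lemma vB_le x y B : v x <= B -> v y <= B -> v (x - y) <= B.
Proof. by move=> hx hy; apply: vD_le; rewrite ?vN. Qed.

Lemma vDl_eq x y : v y < v x -> v (x + y) = v x.
Proof.
move=> h; apply/eqP; rewrite eq_le (vD_le (lexx _) (ltW h)) /=.
have := vD (x + y) (- y); rewrite addrK vN le_max => /orP[//|hy].
by move: h; rewrite ltNge hy.
Qed.

Lemma v_sum_le (I : Type) (r : seq I) (P : pred I) (F : I -> K) B :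
  0 <= B -> (forall i, P i -> v (F i) <= B) -> v (\sum_(i <- r | P i) F i) <= B.
Proof.
move=> B0 H; apply: (big_ind (fun x => v x <= B)) => //; first by rewrite v0.
by move=> x y; apply: vD_le.
Qed.

Lemma v_sum_lt (I : Type) (r : seq I) (P : pred I) (F : I -> K) B :
  0 < B -> (forall i, P i -> v (F i) < B) -> v (\sum_(i <- r | P i) F i) < B.
Proof.
move=> B0 H; apply: (big_ind (fun x => v x < B)) => //; first by rewrite v0.
by move=> x y; apply: vD_lt.
Qed.

Lemma vX x n : v (x ^+ n) = v x ^+ n.
Proof. by elim: n => [|n IH]; rewrite ?expr0 ?v1 // !exprS vM IH. Qed.

Lemma v_prod (I : Type) (s : seq I) (F : I -> K) :
  v (\prod_(i <- s) F i) = \prod_(i <- s) v (F i).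
Proof. by elim: s => [|a s IH]; rewrite ?big_nil ?v1 // !big_cons vM IH. Qed.

Lemma vV x : v x^-1 = (v x)^-1.
Proof.
have [->|x0] := eqVneq x 0; first by rewrite invr0 v0 invr0.
have n0 : v x != 0 by rewrite v_eq0.
by apply: (mulfI n0); rewrite -vM !mulfV // v1.
Qed.

Lemma v_natr_le1 n : v n%:R <= 1.
Proof. by elim: n => [|n IH]; rewrite ?v0 // mulrS vD_le ?v1. Qed.

Lemma vM_le x y B : v x <= 1 -> v y <= B -> v (x * y) <= B.
Proof.
move=> hx hy; rewrite vM; apply: le_trans (ler_wpM2r (v_ge0 _) hx) _.
by rewrite mul1r.
Qed.

Lemma vMr_le x y B : v x <= B -> v y <= 1 -> v (x * y) <= B.
Proof. by move=> hx hy; rewrite mulrC; apply: vM_le. Qed.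

Lemma vMn_le x n : v (x *+ n) <= v x.
Proof. by rewrite -mulr_natr vMr_le ?v_natr_le1. Qed.

Lemma vXB_le x y k : v x <= 1 -> v y <= 1 -> v (x ^+ k - y ^+ k) <= v (x - y).
Proof.
move=> hx hy; case: k => [|k]; first by rewrite !expr0 subrr v0 v_ge0.
rewrite subrXX vMr_le // v_sum_le // => i _.
by rewrite vM_le // vX exprn_ile1 ?v_ge0.
Qed.

Lemma cvg_dist_le (u : nat -> K) l a B N :
  cvg_to v u l -> (forall k, (N <= k)%N -> v (u k - a) <= B) -> v (l - a) <= B.
Proof.
move=> hc H; rewrite leNgt; apply/negP => hlt.
have B0 : 0 <= B := le_trans (v_ge0 _) (H N (leqnn N)).
have [M HM] := hc _ (le_lt_trans B0 hlt).
set k := maxn M N; have h1 := HM k (leq_maxl _ _).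
have h2 := le_lt_trans (H k (leq_maxr _ _)) hlt.
have : v ((u k - a) - (u k - l)) < v (l - a) by rewrite vD_lt ?vN.
by rewrite (_ : _ - _ = l - a) ?ltxx //; ring.
Qed.

Lemma v_le_exprn_eq0 x c : 0 <= c -> c < 1 -> (forall n, v x <= c ^+ n) -> x = 0.
Proof.
move=> c0 c1 H; apply/eqP; rewrite -v_eq0 eq_le v_ge0 andbT.
exact: le_exprn_le0 c0 c1 H.
Qed.

Lemma residue_order_dvd lam q k : v lam = 1 -> (0 < q)%N -> residue_order v lam q ->
  v (lam ^+ k - 1) < 1 -> (q %| k)%N.
Proof.
move=> vlam q0 [hq hmin] hk; set a := lam ^+ q; set b := lam ^+ (k %% q).
have vb : v b = 1 by rewrite vX vlam expr1n.
have hat : v (a ^+ (k %/ q) - 1) < 1.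
  rewrite -(expr1n _ (k %/ q)%N); apply: le_lt_trans (vXB_le _ _ _) hq.
    by rewrite vX vlam expr1n.
  by rewrite v1.
have hb : v (b - 1) < 1.
  have E : lam ^+ k = a ^+ (k %/ q) * b by rewrite /a /b -exprM mulnC -exprD -divn_eq.
  have -> : b - 1 = (lam ^+ k - 1) - (a ^+ (k %/ q) - 1) * b by rewrite E; ring.
  by apply: vD_lt => //; rewrite vN vM vb mulr1.
apply/dvdnP; exists (k %/ q)%N; rewrite {1}(divn_eq k q); apply/eqP.
rewrite -{2}(addn0 (_ * _)%N) eqn_add2l eqn0Ngt; apply/negP => hm.
by apply: (hmin (k %% q)%N); rewrite ?hm ?ltn_pmod.
Qed.

(** * Power series over the valuation ring *)

Local Notation OK := (ps_in_OK v).
Implicit Types (a b f g h : pser K) (P Q : {poly K}).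

Definition psadd (a b : pser K) : pser K := fun n => a n + b n.
Definition psum (a : pser K) (z : K) N := \sum_(i < N) a i * z ^+ i.
Definition pstrunc N (a : pser K) : {poly K} := \poly_(i < N) a i.
Definition poly_in_OK (P : {poly K}) := forall i, v P`_i <= 1.

Lemma OK_ps1 : OK (@ps1 K).
Proof. by move=> i; rewrite /ps1; case: (i == 0%N); rewrite ?v1 ?v0. Qed.

Lemma OK_psX : OK (@psX K).
Proof. by move=> i; rewrite /psX; case: (i == 1%N); rewrite ?v1 ?v0. Qed.

Lemma OK_pssub a b : OK a -> OK b -> OK (pssub a b).
Proof. by move=> ha hb i; apply: vB_le. Qed.

Lemma OK_psadd a b : OK a -> OK b -> OK (psadd a b).
Proof. by move=> ha hb i; apply: vD_le. Qed.

Lemma OK_psmul a b : OK a -> OK b -> OK (psmul a b).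
Proof. by move=> ha hb i; apply: v_sum_le => // j _; apply: vM_le. Qed.

Lemma OK_pspow f k : OK f -> OK (pspow f k).
Proof. by move=> hf; elim: k => [|k IH]; [exact: OK_ps1 | exact: OK_psmul]. Qed.

Lemma OK_pscomp g f : OK g -> OK f -> OK (pscomp g f).
Proof.
by move=> hg hf i; apply: v_sum_le => // k _; apply: vM_le => //; apply: OK_pspow.
Qed.

Lemma OK_psderiv a : OK a -> OK (psderiv a).
Proof. by move=> ha i; apply: le_trans (vMn_le _ _) _. Qed.

Lemma coef_pstrunc N a i : (pstrunc N a)`_i = if (i < N)%N then a i else 0.
Proof. exact: coef_poly. Qed.

Lemma psum_pstrunc N a z : psum a z N = (pstrunc N a).[z].
Proof.
rewrite (horner_coef_wide _ (size_poly _ _)) /psum.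
by apply: eq_bigr => i _; rewrite coef_pstrunc ltn_ord.
Qed.

Lemma psum_eq a b z N : (forall i, (i < N)%N -> a i = b i) -> psum a z N = psum b z N.
Proof. by move=> H; apply: eq_bigr => i _; rewrite H. Qed.

Lemma psumB a z N M : (N <= M)%N ->
  psum a z M - psum a z N = \sum_(i < M | ~~ (i < N)%N) a i * z ^+ i.
Proof.
move=> NM; rewrite /psum (big_ord_widen M (fun i => a i * z ^+ i) NM).
by rewrite (bigID (fun i : 'I_M => (i < N)%N)) /= addrC addrK.
Qed.

Lemma v_psumB_le a z N M : OK a -> v z < 1 -> (N <= M)%N ->
  v (psum a z M - psum a z N) <= v z ^+ N.
Proof.
move=> ha hz NM; rewrite psumB // v_sum_le ?exprn_ge0 ?v_ge0 // => i.
rewrite -leqNgt => Ni; apply: vM_le => //; rewrite vX.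
exact: (ler_wiXn2l (v_ge0 z) (ltW hz) Ni).
Qed.

Lemma coefM_pstrunc N a b i : (i < N)%N ->
  psmul a b i = (pstrunc N a * pstrunc N b)`_i.
Proof.
move=> iN; rewrite coefM /psmul; apply: eq_bigr => j _.
have jN : (j < N)%N by apply: leq_ltn_trans iN; rewrite -ltnS.
have ijN : (i - j < N)%N by apply: leq_ltn_trans iN; apply: leq_subr.
by rewrite !coef_pstrunc jN ijN.
Qed.

Lemma pspowS f k : pspow f k.+1 = psmul f (pspow f k).
Proof. by []. Qed.

Lemma coefX_pstrunc N f k i : (i < N)%N -> pspow f k i = ((pstrunc N f) ^+ k)`_i.
Proof.
elim: k i => [|k IH] i iN; first by rewrite expr0 coef1.
rewrite pspowS exprS coefM /psmul.
apply: eq_bigr => j _.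
have jN : (j < N)%N by apply: leq_ltn_trans iN; rewrite -ltnS.
have ijN : (i - j < N)%N by apply: leq_ltn_trans iN; apply: leq_subr.
by rewrite coef_pstrunc jN IH.
Qed.

Lemma pspow_small f k i : f 0%N = 0 -> (i < k)%N -> pspow f k i = 0.
Proof.
move=> f0; elim: k i => [|k IH] i // ik.
rewrite pspowS /psmul big1 // => j _.
case: (posnP j) => [->|jp]; first by rewrite f0 mul0r.
by rewrite IH ?mulr0 //; have := ltn_ord j; lia.
Qed.

Lemma coef_pscomp_pstrunc N g f i : f 0%N = 0 -> (i < N)%N ->
  pscomp g f i = (\sum_(k < N) g k *: (pstrunc N f) ^+ k)`_i.
Proof.
move=> f0 iN; rewrite coef_sum /pscomp.
rewrite (big_ord_widen N (fun k => g k * pspow f k i) iN).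
rewrite [RHS](bigID (fun k : 'I_N => (k < i.+1)%N)) /= [X in _ = _ + X]big1.
  by rewrite addr0; apply: eq_bigr => k _; rewrite coefZ (@coefX_pstrunc N).
move=> k; rewrite -leqNgt => ik.
by rewrite coefZ -(@coefX_pstrunc N) // pspow_small // mulr0.
Qed.

Lemma poly_in_OK_pstrunc N a : OK a -> poly_in_OK (pstrunc N a).
Proof. by move=> ha i; rewrite coef_pstrunc; case: ifP; rewrite ?v0. Qed.

Lemma poly_in_OK_mul P Q : poly_in_OK P -> poly_in_OK Q -> poly_in_OK (P * Q).
Proof. by move=> hP hQ i; rewrite coefM v_sum_le // => j _; apply: vM_le. Qed.

Lemma poly_in_OK_exp P n : poly_in_OK P -> poly_in_OK (P ^+ n).
Proof.
move=> hP; elim: n => [|n IH]; last by rewrite exprS; apply: poly_in_OK_mul.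
by move=> i; rewrite expr0 coef1; case: (i == 0%N); rewrite ?v1 ?v0.
Qed.

Lemma v_horner_le1 P z : poly_in_OK P -> v z <= 1 -> v P.[z] <= 1.
Proof.
move=> hP hz; rewrite horner_coef v_sum_le // => i _.
by rewrite vM_le // vX exprn_ile1 ?v_ge0.
Qed.

Lemma v_horner_psumB_le P z N : poly_in_OK P -> v z < 1 ->
  v (P.[z] - psum (fun i => P`_i) z N) <= v z ^+ N.
Proof.
move=> hP hz; rewrite (horner_coef_wide z (leq_maxl (size P) N)).
by apply: v_psumB_le => //; apply: leq_maxr.
Qed.

Lemma psderivM a b :
  psderiv (psmul a b) = psadd (psmul (psderiv a) b) (psmul a (psderiv b)).
Proof.
apply: functional_extensionality => n.
rewrite /psderiv (coefM_pstrunc _ _ (ltnSn n.+1)) -coef_deriv derivM coefD.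
rewrite /psadd !coefM /psmul; congr (_ + _); apply: eq_bigr => j _;
  have := ltn_ord j; rewrite coef_deriv !coef_pstrunc /= => hj.
  by rewrite ifT ?ifT //; lia.
by rewrite ifT ?ifT //; lia.
Qed.

Lemma psderivD a b : psderiv (psadd a b) = psadd (psderiv a) (psderiv b).
Proof. by apply: functional_extensionality => n; rewrite /psderiv /psadd mulrnDl. Qed.

Lemma psderivX : psderiv (@psX K) = @ps1 K.
Proof.
apply: functional_extensionality => -[|n]; rewrite /psderiv /psX /ps1 /=.
  by rewrite mulr1n.
by rewrite mul0rn.
Qed.

Section Evaluation.
Hypothesis Hc : complete_abs v.

Lemma ps_eval_cvg a z : OK a -> v z < 1 -> cvg_to v (psum a z) (ps_eval v a z).
Proof.
move=> ha hz; apply: (epsilon_spec (inhabits 0) (fun l => cvg_to v _ l)).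
apply: Hc => e e0; have [N hN] := exists_exprn_lt (v_ge0 z) hz e0.
exists N => m n Nm Nn.
wlog mn : m n Nm Nn / (n <= m)%N.
  by move=> W; case: (leqP n m) => h; [|rewrite v_distC]; apply: W => //; apply: ltnW.
apply: le_lt_trans hN; apply: le_trans (v_psumB_le ha hz mn) _.
exact: (ler_wiXn2l (v_ge0 z) (ltW hz) Nn).
Qed.

Lemma v_ps_eval_psumB_le a z N : OK a -> v z < 1 ->
  v (ps_eval v a z - psum a z N) <= v z ^+ N.
Proof.
move=> ha hz; apply: (cvg_dist_le (N := N) (ps_eval_cvg ha hz)) => k Nk.
exact: v_psumB_le.
Qed.

Lemma ps_eval_eq a z L : OK a -> v z < 1 ->
  (forall N, v (L - psum a z N) <= v z ^+ N) -> ps_eval v a z = L.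
Proof.
move=> ha hz H; apply/eqP; rewrite -subr_eq0; apply/eqP.
apply: (v_le_exprn_eq0 (v_ge0 z) hz) => N.
have -> : ps_eval v a z - L = (ps_eval v a z - psum a z N) - (L - psum a z N) by ring.
by apply: vB_le; [exact: v_ps_eval_psumB_le | exact: H].
Qed.

Lemma ps_eval_psum a z M : OK a -> v z < 1 -> (forall i, (M <= i)%N -> a i = 0) ->
  ps_eval v a z = psum a z M.
Proof.
move=> ha hz H; apply: ps_eval_eq => // N; case: (leqP M N) => h.
  rewrite v_distC psumB // big1 ?v0 ?exprn_ge0 ?v_ge0 // => i.
  by rewrite -leqNgt => Ni; rewrite H ?mul0r // (leq_trans h Ni).
by apply: v_psumB_le => //; apply: ltnW.
Qed.

Lemma ps_evalX z : v z < 1 -> ps_eval v (@psX K) z = z.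
Proof.
move=> hz; rewrite (ps_eval_psum (M := 2) OK_psX hz); last by case=> [|[|i]].
by rewrite /psum big_ord_recr big_ord1 /psX /= mul0r add0r mul1r expr1.
Qed.

Lemma ps_eval1 z : v z < 1 -> ps_eval v (@ps1 K) z = 1.
Proof.
move=> hz; rewrite (ps_eval_psum (M := 1) OK_ps1 hz); last by case.
by rewrite /psum big_ord1 /ps1 /= mul1r expr0.
Qed.

Lemma ps_eval_at0 a : OK a -> ps_eval v a 0 = a 0%N.
Proof.
move=> ha; have hz : v 0 < 1 by rewrite v0 ltr01.
have := v_ps_eval_psumB_le 1 ha hz; rewrite /psum big_ord1 expr0 mulr1 v0 expr1.
by move=> h; apply/eqP; rewrite -subr_eq0 -v_eq0 eq_le h v_ge0.
Qed.

Lemma ps_eval_add a b z : OK a -> OK b -> v z < 1 ->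
  ps_eval v (psadd a b) z = ps_eval v a z + ps_eval v b z.
Proof.
move=> ha hb hz; apply: ps_eval_eq => //; first exact: OK_psadd.
move=> N; have -> : psum (psadd a b) z N = psum a z N + psum b z N.
  by rewrite /psum -big_split; apply: eq_bigr => i _; rewrite /psadd mulrDl.
rewrite opprD addrACA.
by apply: vD_le; apply: v_ps_eval_psumB_le.
Qed.

Lemma ps_eval_sub a b z : OK a -> OK b -> v z < 1 ->
  ps_eval v (pssub a b) z = ps_eval v a z - ps_eval v b z.
Proof.
move=> ha hb hz; apply: ps_eval_eq => //; first exact: OK_pssub.
move=> N; have -> : psum (pssub a b) z N = psum a z N - psum b z N.
  by rewrite /psum -sumrB; apply: eq_bigr => i _; rewrite /pssub mulrBl.
set x := ps_eval v a z; set y := ps_eval v b z.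
rewrite (_ : _ - _ = (x - psum a z N) - (y - psum b z N)); last by ring.
by apply: vB_le; apply: v_ps_eval_psumB_le.
Qed.

Lemma ps_eval_mul a b z : OK a -> OK b -> v z < 1 ->
  ps_eval v (psmul a b) z = ps_eval v a z * ps_eval v b z.
Proof.
move=> ha hb hz; apply: ps_eval_eq => //; first exact: OK_psmul.
move=> N; set A := pstrunc N a; set B := pstrunc N b.
have hA := poly_in_OK_pstrunc N ha; have hB := poly_in_OK_pstrunc N hb.
have ea := v_ps_eval_psumB_le N ha hz; have eb := v_ps_eval_psumB_le N hb hz.
rewrite !psum_pstrunc -/A -/B in ea eb.
rewrite (psum_eq (b := fun i => (A * B)`_i)); last exact: coefM_pstrunc.
have hAB := v_horner_psumB_le N (poly_in_OK_mul hA hB) hz.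
set x := ps_eval v a z in ea *; set y := ps_eval v b z in eb *.
have hy : v y <= 1.
  rewrite -(subrK B.[z] y); apply: vD_le; last exact: v_horner_le1 (ltW hz).
  by apply: le_trans eb _; rewrite exprn_ile1 ?v_ge0 ?ltW.
have -> : x * y - psum (fun i => (A * B)`_i) z N =
   ((x - A.[z]) * y + A.[z] * (y - B.[z])) +
   ((A * B).[z] - psum (fun i => (A * B)`_i) z N) by rewrite hornerM; ring.
apply: vD_le => //; apply: vD_le; [apply: vMr_le | apply: vM_le] => //.
exact: v_horner_le1 (ltW hz).
Qed.

Lemma v_ps_eval_le a z : OK a -> a 0%N = 0 -> v z < 1 -> v (ps_eval v a z) <= v z.
Proof.
move=> ha a0 hz; have := v_ps_eval_psumB_le 1 ha hz.
by rewrite /psum big_ord1 a0 mul0r subr0 expr1.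
Qed.

Lemma v_ps_eval_unit a z : OK a -> v (a 0%N) = 1 -> v z < 1 -> v (ps_eval v a z) = 1.
Proof.
move=> ha a0 hz; have := v_ps_eval_psumB_le 1 ha hz.
rewrite /psum big_ord1 expr1 expr0 mulr1 => ht.
by rewrite -(subrK (a 0%N) (ps_eval v a z)) addrC vDl_eq // a0 (le_lt_trans ht hz).
Qed.

Lemma v_ps_eval a z : OK a -> a 0%N = 0 -> v (a 1%N) = 1 -> v z < 1 ->
  v (ps_eval v a z) = v z.
Proof.
move=> ha a0 a1 hz; have [->|zn0] := eqVneq z 0.
  by rewrite ps_eval_at0 // a0.
have := v_ps_eval_psumB_le 2 ha hz.
rewrite /psum big_ord_recr big_ord1 /= a0 mul0r add0r expr1.
set w := ps_eval v a z => h.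
have vz0 : 0 < v z by rewrite lt_def v_eq0 zn0 v_ge0.
have hlt : v (w - a 1%N * z) < v (a 1%N * z).
  by apply: le_lt_trans h _; rewrite vM a1 mul1r expr2 gtr_pMr.
by rewrite -(subrK (a 1%N * z) w) addrC vDl_eq // vM a1 mul1r.
Qed.

Lemma ps_eval_comp g f z : OK g -> OK f -> f 0%N = 0 -> v z < 1 ->
  ps_eval v (pscomp g f) z = ps_eval v g (ps_eval v f z).
Proof.
move=> hg hf f0 hz; set w := ps_eval v f z.
have hw : v w <= v z by apply: v_ps_eval_le.
have hw1 : v w < 1 by apply: le_lt_trans hz.
apply: ps_eval_eq => //; first exact: OK_pscomp.
move=> N; set F := pstrunc N f; set Q := \sum_(k < N) g k *: F ^+ k.
have hF := poly_in_OK_pstrunc N hf.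
have hQ : poly_in_OK Q.
  move=> i; rewrite coef_sum v_sum_le // => k _; rewrite coefZ.
  by apply: vM_le => //; apply: poly_in_OK_exp.
rewrite (psum_eq (b := fun i => Q`_i)); last by move=> i; apply: coef_pscomp_pstrunc.
have -> : ps_eval v g w - psum (fun i => Q`_i) z N =
   (ps_eval v g w - psum g w N) + (psum g w N - Q.[z]) +
   (Q.[z] - psum (fun i => Q`_i) z N) by ring.
apply: vD_le; last exact: v_horner_psumB_le.
apply: vD_le.
  apply: le_trans (v_ps_eval_psumB_le N hg hw1) _.
  by apply: lerXn2r; rewrite ?nnegrE ?v_ge0.
rewrite /psum /Q horner_sum -sumrB v_sum_le ?exprn_ge0 ?v_ge0 // => k _.
rewrite hornerZ horner_exp -mulrBr; apply: vM_le => //.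
have hFz : v F.[z] <= 1 by apply: v_horner_le1 => //; apply: ltW.
apply: le_trans (vXB_le _ (ltW hw1) hFz) _.
by rewrite /F -psum_pstrunc; apply: v_ps_eval_psumB_le.
Qed.

(** * Weierstrass preparation *)

Section WeierstrassDivision.
Variables (h : pser K) (d : nat) (c : R).
Hypothesis hOK : OK h.
Hypothesis hd1 : v (h d) = 1.
Hypotheses (c_ge0 : 0 <= c) (c_lt1 : c < 1).
Hypothesis h_small : forall i, (i < d)%N -> v (h i) <= c.

(* Fixed-point iteration for a series [w] with [h * w = X^d + (terms of
   degree < d)]: the coefficient [m + d] of [h * w] is corrected by dividing
   by the unit [h d]. *)
Definition wstep w : pser K :=
  fun m => w m + (h d)^-1 * ((m == 0%N)%:R - psmul h w (m + d)%N).
Definition wapprox k := iter k wstep (fun _ => 0).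

Lemma hd_neq0 : h d != 0.
Proof. by rewrite -v_eq0 hd1 oner_eq0. Qed.

Lemma v_wstepB w w' m :
  v (wstep w m - wstep w' m) = v (psmul h (pssub w w') (m + d)%N - h d * pssub w w' m).
Proof.
have -> : wstep w m - wstep w' m =
    - ((h d)^-1 * (psmul h (pssub w w') (m + d)%N - h d * pssub w w' m)).
  have -> : psmul h (pssub w w') (m + d) = psmul h w (m + d) - psmul h w' (m + d).
    by rewrite /psmul -sumrB; apply: eq_bigr => i _; rewrite /pssub mulrBr.
  by rewrite /wstep /pssub; move: hd_neq0 => hd0; field.
by rewrite vN vM vV hd1 invr1 mul1r.
Qed.

(* Among [h 0], ..., [h d] only [h d] is a unit: this makes [wstep]
   contract by [c] every [d + 1] steps. *)
Lemma v_psmul_off_diag_le w m E : 0 <= E ->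
  (forall j, (j < m)%N -> v (w j) <= E) ->
  (forall j, (m < j)%N -> (j <= m + d)%N -> c * v (w j) <= E) ->
  v (psmul h w (m + d)%N - h d * w m) <= E.
Proof.
move=> E0 Hlt Hgt.
pose i0 : 'I_(m + d).+1 := Ordinal (leq_addl m d : (d < (m + d).+1)%N).
rewrite /psmul (bigD1 i0) //= addnK addrC addrK v_sum_le // => i hi.
have hid : (i : nat) != d by move: hi; apply: contra => /eqP e; apply/eqP/val_inj.
have := ltn_ord i; case: (ltnP i d) => id him.
  rewrite vM; apply: le_trans (Hgt (m + d - i)%N _ _); [|lia|lia].
  by apply: ler_wpM2r; [exact: v_ge0 | exact: h_small].
by apply: vM_le => //; apply: Hlt; move: hid; lia.
Qed.

Lemma OK_wstep w : OK w -> OK (wstep w).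
Proof.
move=> hw m; apply: vD_le => //; apply: vM_le; first by rewrite vV hd1 invr1.
by apply: vB_le; [exact: v_natr_le1 | exact: OK_psmul].
Qed.

Lemma OK_wapprox k : OK (wapprox k).
Proof.
elim: k => [|k IH] m; first by rewrite /wapprox /= v0.
by rewrite /wapprox iterS; apply: OK_wstep.
Qed.

Lemma cexp_le i j : (i <= j)%N -> c ^+ j <= c ^+ i.
Proof. exact: (ler_wiXn2l c_ge0 (ltW c_lt1)). Qed.

Lemma v_wapproxS_le k m : v (wapprox k.+1 m - wapprox k m) <= c ^+ ((k - m) %/ d.+1).
Proof.
elim: k m => [|k IH] m.
  by rewrite /wapprox /= subr0 div0n expr0; apply: (OK_wstep (OK_wapprox 0)).
rewrite [wapprox k.+2]/wapprox iterS v_wstepB.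
apply: v_psmul_off_diag_le; first exact: exprn_ge0.
  move=> j jm; apply: le_trans (IH j) _; apply: cexp_le; apply: leq_div2r; lia.
move=> j mj jmd; apply: le_trans (ler_wpM2l c_ge0 (IH j)) _.
rewrite -exprS; apply: cexp_le.
have : (k.+1 - m <= (k - j) + d.+1)%N by lia.
move=> /(leq_div2r d.+1); rewrite -{2}(mul1n d.+1) divnDMl //.
by rewrite addn1.
Qed.

Lemma v_wapproxB_le k k' m : (k <= k')%N ->
  v (wapprox k' m - wapprox k m) <= c ^+ ((k - m) %/ d.+1).
Proof.
elim: k' => [|k' IH]; first by rewrite leqn0 => /eqP->; rewrite subrr v0 exprn_ge0.
rewrite leq_eqVlt => /orP[/eqP->|]; first by rewrite subrr v0 exprn_ge0.
rewrite ltnS => kk; rewrite -(subrK (wapprox k' m) (wapprox k'.+1 m)) -addrA.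
apply: vD_le; last exact: IH.
by apply: le_trans (v_wapproxS_le k' m) _; apply: cexp_le; apply: leq_div2r; lia.
Qed.

Definition wcofactor : pser K := fun m =>
  epsilon (inhabits 0) (fun l => cvg_to v (fun k => wapprox k m) l).

Lemma wcofactor_cvg m : cvg_to v (fun k => wapprox k m) (wcofactor m).
Proof.
apply: (epsilon_spec (inhabits 0) (fun l => cvg_to v _ l)).
apply: Hc => e e0; have [n hn] := exists_exprn_lt c_ge0 c_lt1 e0.
exists (m + n * d.+1)%N => a b ha hb.
wlog ab : a b ha hb / (a <= b)%N.
  by move=> W; case: (leqP a b) => hab; [|rewrite v_distC]; apply: W => //; apply: ltnW.
rewrite v_distC; apply: le_lt_trans hn; apply: le_trans (v_wapproxB_le m ab) _.
by apply: cexp_le; rewrite -(mulnK n (ltn0Sn d)) leq_div2r //; lia.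
Qed.

Lemma v_wcofactorB_le k m : v (wcofactor m - wapprox k m) <= c ^+ ((k - m) %/ d.+1).
Proof.
apply: (cvg_dist_le (N := k) (wcofactor_cvg m)) => k' kk'.
exact: v_wapproxB_le.
Qed.

Lemma OK_wcofactor : OK wcofactor.
Proof.
move=> m; rewrite -[wcofactor m]subr0.
apply: (cvg_dist_le (N := 0) (wcofactor_cvg m)) => k _.
by rewrite subr0; apply: OK_wapprox.
Qed.

Lemma wcofactorP m : psmul h wcofactor (m + d)%N = (m == 0%N)%:R.
Proof.
suff : wcofactor m - wstep wcofactor m = 0.
  rewrite /wstep opprD addrA subrr add0r => /eqP.
  rewrite oppr_eq0 mulf_eq0 invr_eq0 (negbTE hd_neq0) /= subr_eq0.
  by move=> /eqP ->.
apply: (v_le_exprn_eq0 c_ge0 c_lt1) => e.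
pose k := (m + d + e * d.+1)%N.
have <- : ((k - (m + d)) %/ d.+1)%N = e by rewrite /k addKn mulnK.
rewrite -(subrK (wapprox k.+1 m) (wcofactor m)) -addrA; apply: vD_le.
  by apply: le_trans (v_wcofactorB_le k.+1 m) _; apply: cexp_le; apply: leq_div2r; lia.
rewrite [wapprox k.+1]/wapprox iterS v_distC v_wstepB.
apply: v_psmul_off_diag_le; first exact: exprn_ge0.
  move=> j jm; apply: le_trans (v_wcofactorB_le k j) _.
  by apply: cexp_le; apply: leq_div2r; lia.
move=> j mj jmd; apply: le_trans (ler_wpM2l c_ge0 (v_wcofactorB_le k j)) _.
apply: le_trans (ler_wpM2r (exprn_ge0 _ c_ge0) (ltW c_lt1)) _; rewrite mul1r.
by apply: cexp_le; apply: leq_div2r; lia.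
Qed.

End WeierstrassDivision.

Lemma weierstrass_preparation h d : OK h -> wideg_is v h d ->
  exists P : {poly K}, [/\ size P = d.+1, P`_d = 1,
    forall i, (i < d)%N -> v P`_i < 1,
    v (h 0%N) = v P`_0 &
    forall x, v x < 1 -> (ps_eval v h x = 0 <-> root P x)].
Proof.
move=> hOK [hd_unit hlow].
have hd1 : v (h d) = 1 by apply/eqP; rewrite eq_le hOK leNgt; apply/negP.
have [|c [c0 c1 hc]] := @uniform_lt1_bound _ (fun i => v (h i)) d.
  by move=> i hi; rewrite v_ge0 hlow.
set W := wcofactor h d; have WOK : OK W := OK_wcofactor hOK hd1 c0 c1 hc.
have WP : forall m, psmul h W (m + d)%N = (m == 0%N)%:R := wcofactorP hOK hd1 c0 c1 hc.
pose P : {poly K} := \poly_(i < d.+1) psmul h W i.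
have coefP i : P`_i = psmul h W i.
  rewrite coef_poly; case: ltnP => // di.
  by have := WP (i - d)%N; rewrite subnK ?(ltnW di) // subn_eq0 leqNgt di.
have Pd : P`_d = 1 by rewrite coefP -(add0n d) WP.
have W0 : v (W 0%N) = 1.
  move: Pd; rewrite coefP /psmul big_ord_recr /= subnn => Pd.
  have hs : v (\sum_(i < d) h i * W (d - i)%N) < 1.
    apply: v_sum_lt => // j _.
    exact: le_lt_trans (vMr_le (hc _ (ltn_ord j)) (WOK _)) c1.
  have e : h d * W 0%N = 1 - \sum_(i < d) h i * W (d - i)%N by rewrite -Pd addrC addrK.
  by move: (congr1 v e); rewrite vM hd1 mul1r vDl_eq ?vN v1.
exists P; split => //.
- by rewrite size_poly_eq //= -coefP Pd oner_eq0.
- move=> i id; rewrite coefP /psmul; apply: v_sum_lt => // j _.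
  have jd : (j < d)%N by apply: leq_ltn_trans id; rewrite -ltnS.
  exact: le_lt_trans (vMr_le (hc _ jd) (WOK _)) c1.
- by rewrite coefP /psmul big_ord1 vM W0 mulr1.
move=> x hx; have evP : P.[x] = ps_eval v h x * ps_eval v W x.
  rewrite -ps_eval_mul // (ps_eval_psum (M := d.+1) (OK_psmul hOK WOK) hx).
    rewrite (horner_coef_wide x (size_poly _ _)).
    by apply: eq_bigr => i _; rewrite coefP.
  by move=> i di; rewrite -coefP nth_default // (leq_trans (size_poly _ _)).
rewrite /root evP mulf_eq0 -[ps_eval v W x == 0]v_eq0 v_ps_eval_unit // oner_eq0 orbF.
by split => [->|/eqP].
Qed.

Lemma distinguished_root_lt1 P d x : size P = d.+1 -> P`_d = 1 ->
  (forall i, (i < d)%N -> v P`_i < 1) -> root P x -> v x < 1.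
Proof.
move=> sP Pd Plow; rewrite ltNge; apply: contraL => hx.
rewrite /root (horner_coef_wide x (eq_leq sP)) big_ord_recr /= Pd mul1r.
have vx0 : 0 < v x by apply: lt_le_trans hx.
have hs : v (\sum_(i < d) P`_i * x ^+ i) < v (x ^+ d).
  apply: v_sum_lt; first by rewrite vX exprn_gt0.
  move=> i _; rewrite vM !vX; apply: lt_le_trans (_ : v x ^+ i <= v x ^+ d).
    by rewrite gtr_pMl ?exprn_gt0 // Plow.
  by apply: ler_weXn2l => //; apply: ltnW.
by rewrite addrC -v_eq0 vDl_eq // vX expf_eq0 (gt_eqF vx0) andbF.
Qed.

Lemma ps_eval_divX a z : OK a -> a 0%N = 0 -> v z < 1 ->
  ps_eval v a z = z * ps_eval v (fun n => a n.+1) z.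
Proof.
move=> ha a0 hz.
have E : a = psmul (@psX K) (fun n => a n.+1).
  apply: functional_extensionality => -[|n]; rewrite /psmul.
    by rewrite big_ord1 /psX mul0r.
  rewrite big_ord_recl /psX /= mul0r add0r big_ord_recl /= mul1r subn1 /=.
  by rewrite big1 ?addr0 // => i _; rewrite mul0r.
have hs : OK (fun n => a n.+1) by move=> n; apply: ha.
rewrite {1}E ps_eval_mul ?ps_evalX //; exact: OK_psX.
Qed.

Section Splitting.
Hypothesis poly_splits :
  forall P : {poly K},
    exists rs : seq K, P = lead_coef P *: \prod_(z <- rs) ('X - z%:P).

Lemma weierstrass_roots h d : OK h -> wideg_is v h d ->
  exists rs : seq K, [/\ size rs = d,
    forall x, v x < 1 -> (ps_eval v h x = 0 <-> x \in rs),
    forall x, x \in rs -> v x < 1 &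
    v (h 0%N) = \prod_(x <- rs) v x].
Proof.
move=> hOK hw; have [P [sP Pd Plow h0 hroot]] := weierstrass_preparation hOK hw.
have [rs Prs] := poly_splits P.
rewrite /lead_coef sP Pd scale1r in Prs.
have rootP x : root P x = (x \in rs) by rewrite Prs root_prod_XsubC.
exists rs; split.
- by have := size_prod_XsubC rs id; rewrite -Prs sP => -[].
- by move=> x hx; rewrite hroot // rootP.
- by move=> x; rewrite -rootP; apply: distinguished_root_lt1 sP Pd Plow.
rewrite h0 -horner_coef0 Prs horner_prod v_prod; apply: eq_bigr => z _.
by rewrite hornerXsubC add0r vN.
Qed.

(** * Periodic points *)

Section Dynamics.
Variables (f : pser K) (lam : K).
Hypotheses (f0 : f 0%N = 0) (f1 : f 1%N = lam) (fOK : OK f) (vlam : v lam = 1).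

Lemma psiterS m : psiter f m.+1 = pscomp f (psiter f m).
Proof. exact: iterS. Qed.

Lemma OK_psiter m : OK (psiter f m).
Proof. by elim: m => [|m IH]; rewrite ?psiterS; [exact: OK_psX | exact: OK_pscomp]. Qed.

Lemma psiter0 m : psiter f m 0%N = 0.
Proof. by case: m => // m; rewrite psiterS /pscomp big_ord1 f0 mul0r. Qed.

Lemma psiter1 m : psiter f m 1%N = lam ^+ m.
Proof.
elim: m => [|m IH]; first by rewrite expr0.
rewrite psiterS /pscomp big_ord_recr big_ord1 /= f0 mul0r add0r f1.
by rewrite /psmul big_ord_recr big_ord1 /= psiter0 mul0r add0r /ps1 /= mulr1 IH exprS.
Qed.

Lemma dyn_ps_eval m z : v z < 1 -> dyn v f m z = ps_eval v (psiter f m) z.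
Proof.
move=> hz; elim: m => [|m IH]; first by rewrite ps_evalX.
rewrite /dyn iterS -/(dyn v f m z) IH psiterS ps_eval_comp //.
  exact: OK_psiter.
exact: psiter0.
Qed.

Lemma v_dyn m z : v z < 1 -> v (dyn v f m z) = v z.
Proof.
move=> hz; rewrite dyn_ps_eval // v_ps_eval //.
- exact: OK_psiter.
- exact: psiter0.
by rewrite psiter1 vX vlam expr1n.
Qed.

Lemma dynD i j z : dyn v f (i + j) z = dyn v f i (dyn v f j z).
Proof. exact: iterD. Qed.

Lemma dynC i j z : dyn v f i (dyn v f j z) = dyn v f j (dyn v f i z).
Proof. by rewrite -!dynD addnC. Qed.

Lemma dyn_at0 m : dyn v f m 0 = 0.
Proof.
rewrite dyn_ps_eval ?v0 ?ltr01 // ps_eval_at0 ?psiter0 //; exact: OK_psiter.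
Qed.

Definition psdisp m := pssub (psiter f m) (@psX K).

Lemma OK_psdisp m : OK (psdisp m).
Proof. exact: OK_pssub (OK_psiter m) OK_psX. Qed.

Lemma psdisp0 m : psdisp m 0%N = 0.
Proof. by rewrite /psdisp /pssub psiter0 /psX subr0. Qed.

Lemma psdisp1 m : psdisp m 1%N = lam ^+ m - 1.
Proof. by rewrite /psdisp /pssub psiter1. Qed.

Lemma ps_eval_psdisp m z : v z < 1 -> ps_eval v (psdisp m) z = dyn v f m z - z.
Proof.
move=> hz; rewrite ps_eval_sub ?ps_evalX ?dyn_ps_eval //.
  exact: OK_psiter.
exact: OK_psX.
Qed.

(* Away from resonance [f^m - id] is itself an isometry, so it has no
   nonzero zero in the disc. *)
Lemma dyn_neq_nonresonant m z : ~ (v (lam ^+ m - 1) < 1) -> v z < 1 -> z != 0 ->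
  dyn v f m z != z.
Proof.
move=> hl hz zn0; rewrite -subr_eq0 -ps_eval_psdisp // -v_eq0.
rewrite v_ps_eval ?v_eq0 //; [exact: OK_psdisp | exact: psdisp0 |].
rewrite psdisp1; apply/eqP; rewrite eq_le; apply/andP; split.
  by apply: vB_le; rewrite ?vX ?vlam ?expr1n ?v1.
by rewrite leNgt; apply/negP.
Qed.

Lemma dyn_periodM k j x : dyn v f k x = x -> dyn v f (j * k) x = x.
Proof. by move=> hk; elim: j => [|j IH] //; rewrite mulSn dynD IH hk. Qed.

Lemma exists_min_period N x : v x < 1 -> (0 < N)%N -> dyn v f N x = x ->
  exists2 k, min_period v f k x & (k %| N)%N.
Proof.
move=> hx N0 hN.
have exP : exists n, (0 < n)%N && (dyn v f n x == x) by exists N; rewrite N0 hN eqxx.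
case: (ex_minnP exP) => k /andP[k0 /eqP hk] kmin.
have kminP j : (0 < j < k)%N -> dyn v f j x <> x.
  by move=> /andP[j0 jk] hj; have := kmin j; rewrite j0 hj eqxx leqNgt jk => /(_ isT).
exists k; first by split.
have hmod : dyn v f (N %% k) x = x.
  by move: hN; rewrite {1}(divn_eq N k) addnC dynD dyn_periodM.
rewrite /dvdn eqn0Ngt; apply/negP => hm.
by apply: (kminP (N %% k)%N); rewrite // hm ltn_pmod.
Qed.

Lemma uniq_orbit N x : min_period v f N x -> uniq [seq dyn v f j x | j <- iota 0 N].
Proof.
case=> hx N0 hN hmin; rewrite map_inj_in_uniq ?iota_uniq //.
suff H i j : (i < j)%N -> (j < N)%N -> dyn v f i x <> dyn v f j x.
  move=> i j; rewrite !mem_iota /= !add0n => iN jN e.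
  by case: (ltngtP i j) => h //; [case: (H i j h jN e) | case: (H j i h iN (esym e))].
move=> ij jN e; apply: (hmin (N - j + i)%N); first by apply/andP; split; lia.
by rewrite dynD e -dynD subnK ?(ltnW jN).
Qed.

Lemma mem_orbit_size (rs : seq K) N x : min_period v f N x -> size rs = N ->
  (forall j, (j < N)%N -> dyn v f j x \in rs) ->
  forall y, y \in rs -> exists j, y = dyn v f j x.
Proof.
move=> hm hs hin y yrs.
have sub : {subset [seq dyn v f j x | j <- iota 0 N] <= rs}.
  by move=> z /mapP[j]; rewrite mem_iota /= add0n => jN ->; apply: hin.
have hsz : (size rs <= size [seq dyn v f j x | j <- iota 0 N])%N.
  by rewrite size_map size_iota hs.
have [_ eqs] := uniq_min_size (uniq_orbit hm) sub hsz.
by move: yrs; rewrite -eqs => /mapP[j _ ->]; exists j.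
Qed.

Lemma dyn_inj_periodic N j x y : (0 < N)%N -> dyn v f N x = x -> dyn v f N y = y ->
  dyn v f j x = dyn v f j y -> x = y.
Proof.
move=> N0 hx hy e.
have E : (j * N = j * N.-1 + j)%N by rewrite -{3}(muln1 j) -mulnDr addn1 prednK.
by rewrite -(dyn_periodM j hx) -(dyn_periodM j hy) E !dynD e.
Qed.

Lemma cycle_of_roots (rs : seq K) N : (0 < N)%N -> size rs = N ->
  (forall x, x \in rs -> min_period v f N x) ->
  (forall x j, x \in rs -> dyn v f j x \in rs) ->
  exists r, [/\ r \in rs, min_period v f N r,
    forall y, y \in rs -> exists k, y = dyn v f k r &
    forall y, y \in rs -> v y = powR (\prod_(x <- rs) v x) N%:R^-1].
Proof.
move=> N0 srs hper hinv.
have rrs : nth 0 rs 0 \in rs by rewrite mem_nth // srs.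
set r := nth 0 rs 0 in rrs; have hr : v r < 1 by case: (hper r rrs).
have orb := mem_orbit_size (hper r rrs) srs (fun j _ => hinv r j rrs).
have vrs y : y \in rs -> v y = v r by move=> /orb[k ->]; rewrite v_dyn.
exists r; split; [by [] | exact: hper | exact: orb | move=> y yrs].
rewrite (prodr_const_seq vrs) srs.
by rewrite powR_exprn_inv ?v_ge0 // vrs.
Qed.

(* [(f^N)' = 1 + h' (f^M - id) + h (f^M - id)']. *)
Lemma ps_eval_psderiv_psiter_eq1 h N M x : OK h ->
  psmul h (psdisp M) = psdisp N -> v x < 1 ->
  ps_eval v h x = 0 -> dyn v f M x = x ->
  ps_eval v (psderiv (psiter f N)) x = 1.
Proof.
move=> hOK hNM hx hx0 hM.
have -> : psiter f N = psadd (psdisp N) (@psX K).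
  by apply: functional_extensionality => i; rewrite /psadd /psdisp /pssub subrK.
have OKdM := OK_psdisp M; have OKdM' := OK_psderiv OKdM.
have OKdN' := OK_psderiv (OK_psdisp N); have OKh' := OK_psderiv hOK.
have OK1 := OK_psmul (OK_psderiv hOK) OKdM; have OK2 := OK_psmul hOK OKdM'.
rewrite psderivD psderivX ps_eval_add ?ps_eval1 //; last exact: OK_ps1.
rewrite -hNM psderivM ps_eval_add // !ps_eval_mul //.
by rewrite ps_eval_psdisp // hM subrr hx0 mulr0 mul0r addr0 add0r.
Qed.

Lemma ps_eval_psderiv_psiter_at0 N : ps_eval v (psderiv (psiter f N)) 0 = lam ^+ N.
Proof.
rewrite ps_eval_at0; last exact: OK_psderiv (OK_psiter N).
by rewrite /psderiv mulr1n psiter1.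
Qed.

Lemma v_quotient_coef0 h N M : psmul h (psdisp M) = psdisp N -> lam ^+ M != 1 ->
  v (h 0%N) = v (lam ^+ N - 1) / v (lam ^+ M - 1).
Proof.
move=> hNM lamM; have := congr1 (fun a => a 1%N) hNM.
rewrite /psmul big_ord_recr big_ord1 /= psdisp0 mulr0 addr0 subn0 !psdisp1 => <-.
by rewrite vM mulfK // v_eq0 subr_eq0.
Qed.

Section PeriodicOrbits.
Variable q : nat.
Hypotheses (q_gt0 : (0 < q)%N) (hres : residue_order v lam q).

Lemma min_period_dvd x k : min_period v f k x -> x != 0 -> (q %| k)%N.
Proof.
case=> hx k0 hk _ xn0; apply: (residue_order_dvd vlam q_gt0 hres).
rewrite ltNge; apply/negP => hle.
have /dyn_neq_nonresonant : ~ (v (lam ^+ k - 1) < 1) by rewrite ltNge hle.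
by move=> /(_ x hx xn0); rewrite hk eqxx.
Qed.

Lemma cycle_period_q : wideg_is v (psdisp q) q.+1 -> lam ^+ q != 1 ->
  (exists w0, min_period v f q w0 /\ w0 != 0 /\
     forall w, min_period v f q w -> w != 0 -> exists k, w = dyn v f k w0) /\
  (forall w, min_period v f q w -> w != 0 ->
     v w = powR (v (lam ^+ q - 1)) q%:R^-1).
Proof.
move=> [hw_unit hw_low] lamq.
pose h : pser K := fun n => psdisp q n.+1.
have hOK : OK h by move=> n; apply: OK_psdisp.
have hw : wideg_is v h q by split => // i iq; apply: hw_low.
have [rs [srs hroot hsmall hprod]] := weierstrass_roots hOK hw.
have h0 : ps_eval v h 0 != 0 by rewrite ps_eval_at0 // /h psdisp1 subr_eq0.
have rsP x : v x < 1 -> x \in rs <-> x != 0 /\ dyn v f q x = x.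
  move=> hx; have := ps_eval_divX (OK_psdisp q) (psdisp0 q) hx.
  rewrite ps_eval_psdisp // -/h -hroot // => E; split=> [hx0 | [xn0 hper]].
    split; first by apply: contra_neq h0 => x0; rewrite -{1}x0.
    by apply/eqP; rewrite -subr_eq0 E hx0 mulr0.
  by move: E; rewrite hper subrr => /esym/eqP; rewrite mulf_eq0 (negbTE xn0) => /eqP.
have hper x : x \in rs -> min_period v f q x.
  move=> xrs; have hx := hsmall x xrs; have [xn0 hq] := (rsP x hx).1 xrs.
  have [k mk kq] := exists_min_period hx q_gt0 hq.
  suff -> : q = k by [].
  by apply/eqP; rewrite eqn_dvd (min_period_dvd mk xn0) kq.
have hinv x j : x \in rs -> dyn v f j x \in rs.
  move=> xrs; have hx := hsmall x xrs; have [xn0 hq] := (rsP x hx).1 xrs.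
  apply/(rsP _ _).2; first by rewrite v_dyn.
  by split; [rewrite -v_eq0 v_dyn // v_eq0 | rewrite dynC hq].
have [r [rrs mr orb vrs]] := cycle_of_roots q_gt0 srs hper hinv.
have inrs w : min_period v f q w -> w != 0 -> w \in rs.
  by case=> hw1 _ hwq _ wn0; apply/rsP.
split.
  exists r; split => //; split; first by have [] := (rsP r (hsmall r rrs)).1 rrs.
  by move=> w mw wn0; apply: orb; apply: inrs.
by move=> w mw wn0; rewrite vrs ?inrs // -hprod /h psdisp1.
Qed.

Lemma min_period_qpn p n x : prime p -> (0 < n)%N -> v x < 1 -> x != 0 ->
  dyn v f (q * p ^ n) x = x -> dyn v f (q * p ^ n.-1) x != x ->
  min_period v f (q * p ^ n) x.
Proof.
move=> pp n0 hx xn0 hN hN'.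
have N0 : (0 < q * p ^ n)%N by rewrite muln_gt0 q_gt0 expn_gt0 prime_gt0.
have [k mk kN] := exists_min_period hx N0 hN.
have kq : k = (q * (k %/ q))%N by rewrite mulnC divnK // (min_period_dvd mk xn0).
have : (k %/ q %| p ^ n)%N by rewrite -(dvdn_pmul2l q_gt0) -kq.
case/(dvdn_pfactor _ _ pp) => e en ke.
have [en'|ne] := ltnP e n; last first.
  by rewrite kq ke (_ : e = n) // in mk; apply/eqP; rewrite eqn_leq en ne.
case/negP: hN'; apply/eqP.
have : (k %| q * p ^ n.-1)%N by rewrite kq ke dvdn_pmul2l // dvdn_exp2l // -ltnS prednK.
by case/dvdnP => t ->; apply: dyn_periodM; case: mk.
Qed.

Lemma cycle_period_qpn p n h : prime p -> (1 <= n)%N -> OK h ->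
  psmul h (psdisp (q * p ^ n.-1)) = psdisp (q * p ^ n) ->
  wideg_is v h (q * p ^ n) ->
  (forall z0, periodic_pt v f (q * p ^ n.-1) z0 ->
     ps_eval v (psderiv (psiter f (q * p ^ n))) z0 != 1) ->
  (exists z0, min_period v f (q * p ^ n) z0 /\
     forall w, min_period v f (q * p ^ n) w -> exists k, w = dyn v f k z0) /\
  (forall z0, min_period v f (q * p ^ n) z0 ->
     v z0 = powR (v (lam ^+ (q * p ^ n) - 1) / v (lam ^+ (q * p ^ n.-1) - 1))
                 (q * p ^ n)%:R^-1).
Proof.
move=> pp n1 hOK hmul hw hder.
set N := (q * p ^ n)%N in hmul hw hder *; set M := (q * p ^ n.-1)%N in hmul hder *.
have M0 : (0 < M)%N by rewrite muln_gt0 q_gt0 expn_gt0 prime_gt0.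
have MN : (M < N)%N by rewrite ltn_pmul2l // ltn_exp2l ?prime_gt1 // prednK.
have N0 : (0 < N)%N := ltn_trans M0 MN.
have evN x : v x < 1 -> dyn v f N x - x = ps_eval v h x * (dyn v f M x - x).
  by move=> hx; rewrite -!ps_eval_psdisp // -hmul ps_eval_mul //; apply: OK_psdisp.
have hM x : v x < 1 -> ps_eval v h x = 0 -> dyn v f M x != x.
  move=> hx hx0; apply/eqP => hMx; move: (hder x (conj hx hMx)).
  by rewrite (ps_eval_psderiv_psiter_eq1 hOK hmul) ?eqxx.
have [rs [srs hroot hsmall hprod]] := weierstrass_roots hOK hw.
have rsP y : v y < 1 -> y \in rs <-> dyn v f N y = y /\ dyn v f M y != y.
  move=> hy; rewrite -hroot //; split=> [hy0 | [hNy hMy]].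
    by split; [apply/eqP; rewrite -subr_eq0 evN // hy0 mul0r | exact: hM].
  move: (evN y hy); rewrite hNy subrr => /esym/eqP.
  by rewrite mulf_eq0 subr_eq0 (negbTE hMy) orbF => /eqP.
have hper x : x \in rs -> min_period v f N x.
  move=> xrs; have hx := hsmall x xrs; have [hNx hMx] := (rsP x hx).1 xrs.
  apply: min_period_qpn => //; apply: contra_neq hMx => ->.
  by rewrite dyn_at0.
have hinv x j : x \in rs -> dyn v f j x \in rs.
  move=> xrs; have hx := hsmall x xrs; have [hNx hMx] := (rsP x hx).1 xrs.
  apply/(rsP _ _).2; first by rewrite v_dyn.
  split; first by rewrite dynC hNx.
  apply: contra_neq hMx => e; apply: (dyn_inj_periodic (j := j) N0 _ hNx).
    by rewrite dynC hNx.
  by rewrite dynC e.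
have [r [rrs mr orb vrs]] := cycle_of_roots N0 srs hper hinv.
have inrs w : min_period v f N w -> w \in rs.
  case=> hw1 _ hwN hmin; apply/rsP => //; split => //.
  by apply/eqP; apply: hmin; rewrite M0 MN.
split; first by exists r; split => // w /inrs /orb.
have lamM : lam ^+ M != 1.
  have hp0 : periodic_pt v f M 0 by rewrite /periodic_pt dyn_at0 v0.
  have NMp : N = (M * p)%N by rewrite /N /M -mulnA -expnSr prednK.
  apply: contra_neq (hder 0 hp0) => lM.
  by rewrite ps_eval_psderiv_psiter_at0 NMp exprM lM expr1n.
by move=> w /inrs wrs; rewrite vrs // -hprod (v_quotient_coef0 hmul lamM).
Qed.

End PeriodicOrbits.
End Dynamics.
End Splitting.
End Evaluation.
End ValuedField.

Theorem proposition5p1 (R : realType) (K : closedFieldType) (v : K -> R)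
  (p q : nat) (lam : K) (f : pser K) :
  ultra_abs v -> nontrivial_abs v -> complete_abs v ->
  residue_char v p ->
  (0 < q)%N -> ~~ (p %| q)%N ->
  v lam = 1 -> residue_order v lam q ->
  f 0%N = 0 -> f 1%N = lam -> ps_in_OK v f ->
  (* (1) *)
  (wideg_is v (pssub (psiter f q) (@psX K)) q.+1 -> lam ^+ q != 1 ->
     (exists w0, min_period v f q w0 /\ w0 != 0 /\
        forall w, min_period v f q w -> w != 0 -> exists k, w = dyn v f k w0) /\
     (forall w, min_period v f q w -> w != 0 ->
        v w = powR (v (lam ^+ q - 1)) (q%:R^-1))) /\
  (* (2) *)
  (forall n : nat, (1 <= n)%N ->
     (exists h : pser K,
        ps_in_OK v h /\
        (exists i, pssub (psiter f (q * p ^ n.-1)) (@psX K) i != 0) /\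
        psmul h (pssub (psiter f (q * p ^ n.-1)) (@psX K))
          = pssub (psiter f (q * p ^ n)) (@psX K) /\
        wideg_is v h (q * p ^ n)) ->
     (forall z0, periodic_pt v f (q * p ^ n.-1) z0 ->
        ps_eval v (psderiv (psiter f (q * p ^ n))) z0 != 1) ->
     (exists z0, min_period v f (q * p ^ n) z0 /\
        forall w, min_period v f (q * p ^ n) w -> exists k, w = dyn v f k z0) /\
     (forall z0, min_period v f (q * p ^ n) z0 ->
        v z0 = powR (v (lam ^+ (q * p ^ n) - 1) / v (lam ^+ (q * p ^ n.-1) - 1))
                    ((q * p ^ n)%:R^-1))).
Proof.
move=> Hv _ Hc [pp _] q0 _ vlam hres f0 f1 fOK.
have splits (P : {poly K}) : exists rs, P = lead_coef P *: \prod_(z <- rs) ('X - z%:P).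
  by have [rs ?] := closed_field_poly_normal P; exists rs.
split; first exact: (cycle_period_q Hv Hc splits f0 f1 fOK vlam q0 hres).
move=> n n1 [h [hOK [_ [hmul hw]]]].
exact: (cycle_period_qpn Hv Hc splits f0 f1 fOK vlam q0 hres pp n1 hOK hmul hw).
Qed.
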